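(* Let $\tau>0$, $\lambda=1-\tau^2$, and let $\gamma:I\subset\mathbb{R}\to H$, $\gamma(s)=(e^{iy(s)}\cos x(s),\sin x(s))$, be the profile curve of a rotationally invariant surface $\Phi(s,t)=(e^{iy(s)}\cos x(s), e^{it}\sin x(s))$ in $\mathbb{S}^3_\tau$ with Gauss curvature $K$. Then, after a suitable reparametrization of $\gamma$, there exists a function $\alpha:I\to\mathbb{R}$ such that $x,y,\alpha$ satisfy \[ \begin{aligned} x'&=\cos\alpha,\\ y'&=\frac{1}{\tau}\frac{\sqrt{1-\lambda\sin^2x}}{\cos x}\sin\alpha,\\ \alpha'&=\frac{\tan x}{\sin\alpha}\left[\frac{1-\lambda\sin^2x}{1-2\lambda\sin^2x}K-\cos^2\alpha\left(\frac{1-\lambda}{1-\lambda\sin^2x}+\frac{4\lambda\cos^2x}{1-2\lambda\sin^2x}\right)\right]. \end{aligned} \] Moreover, if $K$ is constant and $(x(s),y(s),\alpha(s))$ is a solution of this system, then the quantity \[ \mathcal{E}=\frac{(1-2\lambda\sin^2x)^2}{1-\lambda\sin^2x}\cos^2x\cos^2\alpha+K(1-\lambda\sin^2x)\sin^2x \] is constant.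
   Context: The Berger sphere $\mathbb{S}^3_\tau$ ($\tau>0$) is the set $\{(z,w)\in\mathbb{C}^2: |z|^2+|w|^2=1\}$ with the metric $g_\tau(X,Y)=\langle X,Y\rangle-(1-\tau^2)\langle X,V\rangle\langle Y,V\rangle$, where $\langle\cdot,\cdot\rangle$ is the metric induced from the Euclidean metric of $\mathbb{C}^2=\mathbb{R}^4$ and $V_{(z,w)}=(iz,iw)$. A surface is rotationally invariant if it is invariant under the group $\mathrm{Rot}=\{(z,w)\mapsto(z,e^{it}w): t\in\mathbb{R}\}$. The orbit space $\mathbb{S}^3_\tau/\mathrm{Rot}$ is identified with the closed hemisphere $H=\{(z,a)\in\mathbb{C}\times\mathbb{R}: |z|^2+a^2=1,\ a\ge0\}\subset\mathbb{S}^2(1)$, and a rotationally invariant surface is the $\mathrm{Rot}$-orbit of a profile curve $\gamma(s)=(e^{iy(s)}\cos x(s),\sin x(s))$ with $\sin x(s)\ge 0$, parametrized by $\Phi(s,t)=(e^{iy(s)}\cos x(s),e^{it}\sin x(s))$. *)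

From Stdlib Require Import Reals.
From Coquelicot Require Import Coquelicot.
Open Scope R_scope.

(** Points / vectors of R^4 = C^2, with (z,w) = (z1 + i z2, w1 + i w2). *)
Definition R4 : Type := (R * R * R * R)%type.

Definition dot4 (p q : R4) : R :=
  let '(a1, a2, a3, a4) := p in let '(b1, b2, b3, b4) := q in
  a1 * b1 + a2 * b2 + a3 * b3 + a4 * b4.

(** The vector field V_(z,w) = (iz, iw). *)
Definition Vfield (p : R4) : R4 :=
  let '(z1, z2, w1, w2) := p in (- z2, z1, - w2, w1).

Definition berger_metric (tau : R) (p X Y : R4) : R :=
  dot4 X Y - (1 - tau ^ 2) * dot4 X (Vfield p) * dot4 Y (Vfield p).

Definition lam (tau : R) : R := 1 - tau ^ 2.

Definition c1 (p : R4) : R := let '(a, _, _, _) := p in a.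
Definition c2 (p : R4) : R := let '(_, a, _, _) := p in a.
Definition c3 (p : R4) : R := let '(_, _, a, _) := p in a.
Definition c4 (p : R4) : R := let '(_, _, _, a) := p in a.

Definition Ds (f : R -> R -> R4) (s t : R) : R4 :=
  (Derive (fun u => c1 (f u t)) s, Derive (fun u => c2 (f u t)) s,
   Derive (fun u => c3 (f u t)) s, Derive (fun u => c4 (f u t)) s).
Definition Dt (f : R -> R -> R4) (s t : R) : R4 :=
  (Derive (fun v => c1 (f s v)) t, Derive (fun v => c2 (f s v)) t,
   Derive (fun v => c3 (f s v)) t, Derive (fun v => c4 (f s v)) t).

Definition fundE (tau : R) (f : R -> R -> R4) (s t : R) : R :=
  berger_metric tau (f s t) (Ds f s t) (Ds f s t).
Definition fundF (tau : R) (f : R -> R -> R4) (s t : R) : R :=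
  berger_metric tau (f s t) (Ds f s t) (Dt f s t).
Definition fundG (tau : R) (f : R -> R -> R4) (s t : R) : R :=
  berger_metric tau (f s t) (Dt f s t) (Dt f s t).

Definition pds (h : R -> R -> R) (s t : R) : R := Derive (fun u => h u t) s.
Definition pdt (h : R -> R -> R) (s t : R) : R := Derive (fun v => h s v) t.

Definition det3 (a11 a12 a13 a21 a22 a23 a31 a32 a33 : R) : R :=
  a11 * (a22 * a33 - a23 * a32) - a12 * (a21 * a33 - a23 * a31)
  + a13 * (a21 * a32 - a22 * a31).

(** Gauss (intrinsic) curvature of the metric E ds^2 + 2F ds dt + G dt^2
    induced on the surface f, given by Brioschi's formula. *)
Definition gauss_curvature (tau : R) (f : R -> R -> R4) (s t : R) : R :=
  let E := fundE tau f in let F := fundF tau f in let G := fundG tau f in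
  let Es := pds E s t in let Et := pdt E s t in
  let Fs := pds F s t in let Ft := pdt F s t in
  let Gs := pds G s t in let Gt := pdt G s t in
  let Ett := pdt (pdt E) s t in let Fst := pds (pdt F) s t in
  let Gss := pds (pds G) s t in
  (det3 (- Ett / 2 + Fst - Gss / 2) (Es / 2) (Fs - Et / 2)
        (Ft - Gs / 2) (E s t) (F s t)
        (Gt / 2) (F s t) (G s t)
   - det3 0 (Et / 2) (Gs / 2)
          (Et / 2) (E s t) (F s t)
          (Gs / 2) (F s t) (G s t))
  / (E s t * G s t - F s t ^ 2) ^ 2.

(** The rotationally invariant surface generated by the profile curve
    gamma(s) = (e^{i y(s)} cos x(s), sin x(s)):
    Phi(s,t) = (e^{i y(s)} cos x(s), e^{i t} sin x(s)). *)
Definition Phi (x y : R -> R) (s t : R) : R4 :=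
  (cos (y s) * cos (x s), sin (y s) * cos (x s), cos t * sin (x s), sin t * sin (x s)).

Definition inI (a b : Rbar) (s : R) : Prop := Rbar_lt a s /\ Rbar_lt s b.

Definition smooth_on (a b : Rbar) (f : R -> R) : Prop :=
  forall (n : nat) (s : R), inI a b s -> ex_derive_n f n s.

Definition rot_system (tau : R) (x y al : R -> R) (Kv : R) (u : R) : Prop :=
  let l := lam tau in
  let S2 := sin (x u) ^ 2 in
  Derive x u = cos (al u) /\
  Derive y u = / tau * (sqrt (1 - l * S2) / cos (x u)) * sin (al u) /\
  Derive al u = tan (x u) / sin (al u) *
    ((1 - l * S2) / (1 - 2 * l * S2) * Kv
     - cos (al u) ^ 2 * ((1 - l) / (1 - l * S2)
                         + 4 * l * cos (x u) ^ 2 / (1 - 2 * l * S2))).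

Definition energy (tau : R) (Kv : R) (x al : R -> R) (u : R) : R :=
  let l := lam tau in
  let S2 := sin (x u) ^ 2 in
  (1 - 2 * l * S2) ^ 2 / (1 - l * S2) * cos (x u) ^ 2 * cos (al u) ^ 2
  + Kv * (1 - l * S2) * S2.

(* Reparametrize the profile curve by arc length for the metric
   dx^2 + tau^2 cos^2 x / (1 - lam sin^2 x) dy^2 of the orbit space.  Then
   (x', tau cos x y' / sqrt (1 - lam sin^2 x)) is a unit vector; taking alpha to be its
   polar angle gives the first two equations.  The coefficients E, F, G of the first
   fundamental form of Phi do not depend on t, so Brioschi's formula expresses K through
   x', x'', y', y''; differentiating cos alpha = x' and eliminating x'' by means of K gives
   the equation for alpha'.  Identities modulo sin^2 + cos^2 = 1 are checked by substituting the rational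
   parametrization of the circle, which turns them into identities of rational functions. *)

From Pilot Require Import Defs.
From Stdlib Require Import Reals Lra Psatz ClassicalEpsilon Classical.
From Coquelicot Require Import Coquelicot.
Open Scope R_scope.

Lemma inI_locally a b s : inI a b s -> locally s (inI a b).
Proof. intros Hs. exact (open_and _ _ (open_Rbar_gt a) (open_Rbar_lt b) s Hs). Qed.

Lemma inI_between a b u v w : inI a b u -> inI a b v -> u <= w <= v -> inI a b w.
Proof.
intros [Hu _] [_ Hv] Hw. split.
- destruct a; simpl in *; auto; lra.
- destruct b; simpl in *; auto; lra.
Qed.

Lemma inI_between_Rmin_Rmax a b u v w :
  inI a b u -> inI a b v -> Rmin u v <= w <= Rmax u v -> inI a b w.
Proof.
intros Hu Hv Hw. destruct (Rle_or_lt u v).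
- rewrite Rmin_left, Rmax_right in Hw by lra. exact (inI_between a b u v w Hu Hv Hw).
- rewrite Rmin_right, Rmax_left in Hw by lra. exact (inI_between a b v u w Hv Hu Hw).
Qed.

Lemma inI_nonempty a b : Rbar_lt a b -> exists s, inI a b s.
Proof.
intros H. destruct a as [a| |], b as [b| |]; simpl in H; try contradiction.
- exists ((a + b) / 2). split; simpl; lra.
- exists (a + 1). split; simpl; auto; lra.
- exists (b - 1). split; simpl; auto; lra.
- exists 0. split; simpl; auto.
Qed.

Lemma inI_exists_gt a b s : inI a b s -> exists s', inI a b s' /\ s < s'.
Proof.
intros [Ha Hb]. destruct b as [b| |]; simpl in Hb; try contradiction.
- exists ((s + b) / 2). split; [split|]; try (simpl; lra).
  destruct a; simpl in *; auto; lra.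
- exists (s + 1). split; [split|]; simpl; auto; try lra.
  destruct a; simpl in *; auto; lra.
Qed.

Lemma inI_exists_lt a b s : inI a b s -> exists s', inI a b s' /\ s' < s.
Proof.
intros [Ha Hb]. destruct a as [a| |]; simpl in Ha; try contradiction.
- exists ((s + a) / 2). split; [split|]; try (simpl; lra).
  destruct b; simpl in *; auto; lra.
- exists (s - 1). split; [split|]; simpl; auto; try lra.
  destruct b; simpl in *; auto; lra.
Qed.

Lemma is_derive_0_const_on a b f :
  (forall s, inI a b s -> is_derive f s 0) ->
  forall u v, inI a b u -> inI a b v -> f u = f v.
Proof.
intros Hf u v Hu Hv.
assert (Hin : forall w, Rmin u v <= w <= Rmax u v -> inI a b w)
  by (intros w; apply inI_between_Rmin_Rmax; assumption).
destruct (MVT_gen f u v (fun _ => 0)) as [w [_ Hw]].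
- intros w Hw. apply Hf, Hin. lra.
- intros w Hw. apply continuity_pt_filterlim, (ex_derive_continuous f).
  exists 0. apply Hf, Hin, Hw.
- lra.
Qed.

Lemma circle_rational_param s c : s ^ 2 + c ^ 2 = 1 ->
  (s = 0 /\ c = -1) \/
  exists q, 1 + q ^ 2 <> 0 /\ s = 2 * q / (1 + q ^ 2) /\ c = (1 - q ^ 2) / (1 + q ^ 2).
Proof.
intros H. destruct (Req_dec c (-1)) as [Hc | Hc].
- left. split; nra.
- right. assert (H0 : 1 + c <> 0) by lra.
  assert (Hq : 1 + (s / (1 + c)) ^ 2 = 2 / (1 + c)).
  { field_simplify_eq; auto. nra. }
  exists (s / (1 + c)). repeat split.
  + pose proof (pow2_ge_0 (s / (1 + c))). lra.
  + rewrite Hq. field. auto.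
  + rewrite Hq. field_simplify_eq; auto. nra.
Qed.

Lemma sin_sqr_add_cos_sqr th : sin th ^ 2 + cos th ^ 2 = 1.
Proof. pose proof (sin2_cos2 th) as H. unfold Rsqr in H. lra. Qed.

Lemma sin_cos_rational_param th :
  (sin th = 0 /\ cos th = -1) \/
  exists q, 1 + q ^ 2 <> 0 /\ sin th = 2 * q / (1 + q ^ 2) /\ cos th = (1 - q ^ 2) / (1 + q ^ 2).
Proof. exact (circle_rational_param _ _ (sin_sqr_add_cos_sqr th)). Qed.

Ltac rationalize_angle th :=
  destruct (sin_cos_rational_param th) as [[-> ->] | (?q & ?Hq & -> & ->)].

Definition polar_angle (c s : R) : R := if Rlt_dec 0 s then acos c else - acos c.

Lemma cos_polar_angle c s : c ^ 2 + s ^ 2 = 1 -> cos (polar_angle c s) = c.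
Proof.
intros H. assert (Hc : -1 <= c <= 1) by (split; nra).
unfold polar_angle. destruct (Rlt_dec 0 s); rewrite ?cos_neg; apply cos_acos, Hc.
Qed.

Lemma sin_polar_angle c s : c ^ 2 + s ^ 2 = 1 -> sin (polar_angle c s) = s.
Proof.
intros H. assert (Hc : -1 <= c <= 1) by (split; nra).
assert (Hs : sqrt (1 - c²) = Rabs s).
{ rewrite <- sqrt_Rsqr_abs. f_equal. unfold Rsqr. lra. }
unfold polar_angle. destruct (Rlt_dec 0 s).
- rewrite sin_acos, Hs by exact Hc. apply Rabs_pos_eq. lra.
- rewrite sin_neg, sin_acos, Hs by exact Hc. rewrite Rabs_left1 by lra. ring.
Qed.

Lemma is_derive_polar_angle (c s : R -> R) u (dc : R) :
  c u ^ 2 + s u ^ 2 = 1 -> s u <> 0 -> continuous s u -> is_derive c u dc ->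
  is_derive (fun v => polar_angle (c v) (s v)) u (- dc / s u).
Proof.
intros H Hs0 Hs Hc.
assert (Hcu : -1 < c u < 1) by (pose proof (pow2_gt_0 _ Hs0); split; nra).
assert (Hacos : is_derive (fun v => acos (c v)) u (-1 / sqrt (1 - (c u)²) * dc)).
{ apply is_derive_Reals, (derivable_pt_lim_comp c acos); [apply is_derive_Reals, Hc |].
  apply (derive_pt_eq_1 acos _ _ (derivable_pt_acos _ Hcu)), derive_pt_acos. }
assert (Hsqrt : sqrt (1 - (c u)²) = Rabs (s u)).
{ rewrite <- sqrt_Rsqr_abs. f_equal. unfold Rsqr. lra. }
rewrite Hsqrt in Hacos.
destruct (Rlt_or_le 0 (s u)) as [Hpos | Hneg].
- apply (is_derive_ext_loc (fun v => acos (c v))).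
  + apply (filter_imp (fun v => 0 < s v)); [| exact (Hs _ (open_gt 0 _ Hpos))].
    intros v Hv. unfold polar_angle. destruct (Rlt_dec 0 (s v)); [reflexivity | lra].
  + rewrite Rabs_pos_eq in Hacos by lra.
    replace (- dc / s u) with (-1 / s u * dc) by (field; lra).
    exact Hacos.
- assert (Hneg' : s u < 0) by lra.
  apply (is_derive_ext_loc (fun v => - acos (c v))).
  + apply (filter_imp (fun v => s v < 0)); [| exact (Hs _ (open_lt 0 _ Hneg'))].
    intros v Hv. unfold polar_angle. destruct (Rlt_dec 0 (s v)); [lra | reflexivity].
  + rewrite Rabs_left in Hacos by lra.
    replace (- dc / s u) with (- (-1 / - s u * dc)) by (field; lra).
    apply (is_derive_opp (fun v => acos (c v))), Hacos.
Qed.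

Lemma one_sub_lam tau : 1 - lam tau = tau ^ 2.
Proof. unfold lam. ring. Qed.

Lemma one_sub_lam_sin_sqr_pos tau z : 0 < tau -> cos z <> 0 ->
  0 < 1 - lam tau * sin z ^ 2.
Proof.
intros Htau Hc. unfold lam. pose proof (sin_sqr_add_cos_sqr z).
pose proof (pow2_gt_0 _ Hc). pose proof (pow2_ge_0 (sin z)). nra.
Qed.

(** * Smooth functions on an open interval *)

(* Recursive through [Derive f] rather than [Derive_n], so that closure properties follow
   by induction on [n]. *)
Fixpoint Cn_on (a b : Rbar) (n : nat) (f : R -> R) : Prop :=
  match n with
  | O => True
  | S n => (forall s, inI a b s -> ex_derive f s) /\ Cn_on a b n (Derive f)
  end.

Lemma ex_derive_n_SS f n s :
  ex_derive_n f (S (S n)) s <-> ex_derive_n (Derive f) (S n) s.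
Proof.
assert (E : forall t, Derive_n (Derive f) n t = Derive_n f (S n) t).
{ intros t. rewrite (Derive_n_comp f n 1), Nat.add_1_r. reflexivity. }
split; intros H.
- exact (ex_derive_ext _ _ s (fun t => eq_sym (E t)) H).
- exact (ex_derive_ext _ _ s E H).
Qed.

Lemma smooth_on_Cn_on a b f : smooth_on a b f <-> forall n, Cn_on a b n f.
Proof.
split.
- intros Hf n. revert f Hf. induction n as [|n IH]; intros f Hf; [exact I |]. split.
  + intros s Hs. exact (Hf 1%nat s Hs).
  + apply IH. intros [|k] s Hs; [exact I |].
    exact (proj1 (ex_derive_n_SS f k s) (Hf (S (S k)) s Hs)).
- intros Hf n. revert f Hf. induction n as [|n IH]; intros f Hf s Hs; [exact I |].
  destruct n as [|n]; [exact (proj1 (Hf 1%nat) s Hs) |].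
  apply (proj2 (ex_derive_n_SS f n s)).
  exact (IH (Derive f) (fun k => proj2 (Hf (S k))) s Hs).
Qed.

Section Cn_closure.
Variables a b : Rbar.

Lemma Cn_on_ext n f g : (forall s, inI a b s -> f s = g s) -> Cn_on a b n f -> Cn_on a b n g.
Proof.
revert f g. induction n as [|n IH]; intros f g E Hf; [exact I |].
destruct Hf as [Hf1 Hf2].
assert (Hloc : forall s, inI a b s -> locally s (fun t => f t = g t)).
{ intros s Hs. apply (filter_imp (inI a b)); [exact E | exact (inI_locally a b s Hs)]. }
split.
- intros s Hs. exact (ex_derive_ext_loc f g s (Hloc s Hs) (Hf1 s Hs)).
- apply (IH (Derive f)); [| exact Hf2].
  intros s Hs. exact (Derive_ext_loc f g s (Hloc s Hs)).
Qed.

Lemma Cn_on_pred n f : Cn_on a b (S n) f -> Cn_on a b n f.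
Proof.
revert f. induction n as [|n IH]; [intros; exact I |].
intros f [Hf1 Hf2]. split; [exact Hf1 | exact (IH _ Hf2)].
Qed.

Lemma Cn_on_const n c : Cn_on a b n (fun _ => c).
Proof.
revert c. induction n as [|n IH]; intros c; [exact I |]. split.
- intros s _. apply ex_derive_const.
- apply (Cn_on_ext n (fun _ => 0)); [| apply IH].
  intros s _. symmetry. apply Derive_const.
Qed.

Lemma Cn_on_id n : Cn_on a b n (fun s => s).
Proof.
destruct n as [|n]; [exact I |]. split.
- intros s _. apply ex_derive_id.
- apply (Cn_on_ext n (fun _ => 1)); [| apply Cn_on_const].
  intros s _. symmetry. apply Derive_id.
Qed.

Lemma Cn_on_plus n f g : Cn_on a b n f -> Cn_on a b n g -> Cn_on a b n (fun s => f s + g s).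
Proof.
revert f g. induction n as [|n IH]; [intros; exact I |].
intros f g [Hf1 Hf2] [Hg1 Hg2]. split.
- intros s Hs. exact (ex_derive_plus f g s (Hf1 s Hs) (Hg1 s Hs)).
- apply (Cn_on_ext n (fun s => Derive f s + Derive g s)); [| exact (IH _ _ Hf2 Hg2)].
  intros s Hs. symmetry. apply Derive_plus; auto.
Qed.

Lemma Cn_on_opp n f : Cn_on a b n f -> Cn_on a b n (fun s => - f s).
Proof.
revert f. induction n as [|n IH]; [intros; exact I |].
intros f [Hf1 Hf2]. split.
- intros s Hs. exact (ex_derive_opp f s (Hf1 s Hs)).
- apply (Cn_on_ext n (fun s => - Derive f s)); [| exact (IH _ Hf2)].
  intros s Hs. symmetry. apply Derive_opp.
Qed.

Lemma Cn_on_mult n f g : Cn_on a b n f -> Cn_on a b n g -> Cn_on a b n (fun s => f s * g s).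
Proof.
revert f g. induction n as [|n IH]; intros f g Hf Hg; [exact I |].
pose proof (Cn_on_pred n f Hf) as Hf'. pose proof (Cn_on_pred n g Hg) as Hg'.
destruct Hf as [Hf1 Hf2], Hg as [Hg1 Hg2]. split.
- intros s Hs. apply ex_derive_mult; auto.
- apply (Cn_on_ext n (fun s => Derive f s * g s + f s * Derive g s)).
  + intros s Hs. symmetry. apply Derive_mult; auto.
  + apply Cn_on_plus; apply IH; assumption.
Qed.

Lemma Cn_on_comp a' b' n g f : (forall k, Cn_on a' b' k g) -> Cn_on a b n f ->
  (forall s, inI a b s -> inI a' b' (f s)) -> Cn_on a b n (fun s => g (f s)).
Proof.
revert g f. induction n as [|n IH]; intros g f Hg Hf Hfg; [exact I |].
pose proof (Cn_on_pred n f Hf) as Hf'. destruct Hf as [Hf1 Hf2].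
assert (Hg1 : forall s, inI a b s -> ex_derive g (f s))
  by (intros s Hs; exact (proj1 (Hg 1%nat) _ (Hfg s Hs))).
split.
- intros s Hs. exact (ex_derive_comp g f s (Hg1 s Hs) (Hf1 s Hs)).
- apply (Cn_on_ext n (fun s => Derive g (f s) * Derive f s)).
  + intros s Hs. rewrite (Derive_comp g f s); auto. apply Rmult_comm.
  + apply Cn_on_mult; [| exact Hf2]. apply IH; [| exact Hf' | exact Hfg].
    intros k. exact (proj2 (Hg (S k))).
Qed.

End Cn_closure.

Section smooth_closure.
Variables a b : Rbar.

Lemma smooth_on_ext f g :
  (forall s, inI a b s -> f s = g s) -> smooth_on a b f -> smooth_on a b g.
Proof. rewrite !smooth_on_Cn_on. intros E Hf n. exact (Cn_on_ext a b n f g E (Hf n)). Qed.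

Lemma smooth_on_const c : smooth_on a b (fun _ => c).
Proof. apply smooth_on_Cn_on. intros n. apply Cn_on_const. Qed.

Lemma smooth_on_id : smooth_on a b (fun s => s).
Proof. apply smooth_on_Cn_on. intros n. apply Cn_on_id. Qed.

Lemma smooth_on_plus f g :
  smooth_on a b f -> smooth_on a b g -> smooth_on a b (fun s => f s + g s).
Proof. rewrite !smooth_on_Cn_on. intros Hf Hg n. apply Cn_on_plus; auto. Qed.

Lemma smooth_on_minus f g :
  smooth_on a b f -> smooth_on a b g -> smooth_on a b (fun s => f s - g s).
Proof. rewrite !smooth_on_Cn_on. intros Hf Hg n. apply Cn_on_plus, Cn_on_opp; auto. Qed.

Lemma smooth_on_mult f g :
  smooth_on a b f -> smooth_on a b g -> smooth_on a b (fun s => f s * g s).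
Proof. rewrite !smooth_on_Cn_on. intros Hf Hg n. apply Cn_on_mult; auto. Qed.

Lemma smooth_on_comp a' b' g f : smooth_on a' b' g -> smooth_on a b f ->
  (forall s, inI a b s -> inI a' b' (f s)) -> smooth_on a b (fun s => g (f s)).
Proof. rewrite !smooth_on_Cn_on. intros Hg Hf Hfg n. apply (Cn_on_comp a b a' b'); auto. Qed.

Lemma smooth_on_Derive f : smooth_on a b f -> smooth_on a b (Derive f).
Proof. rewrite !smooth_on_Cn_on. intros Hf n. exact (proj2 (Hf (S n))). Qed.

Lemma smooth_on_ex_derive f s : smooth_on a b f -> inI a b s -> ex_derive f s.
Proof. intros Hf. exact (Hf 1%nat s). Qed.

End smooth_closure.

Lemma Cn_on_sin_cos n : Cn_on m_infty p_infty n sin /\ Cn_on m_infty p_infty n cos.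
Proof.
induction n as [|n [IHs IHc]]; [split; exact I |]. split; split.
- intros s _. auto_derive. exact I.
- apply (Cn_on_ext _ _ n cos); [| exact IHc].
  intros s _. symmetry. apply is_derive_unique, is_derive_Reals, derivable_pt_lim_sin.
- intros s _. auto_derive. exact I.
- apply (Cn_on_ext _ _ n (fun s => - sin s)); [| exact (Cn_on_opp _ _ n sin IHs)].
  intros s _. symmetry. apply is_derive_unique, is_derive_Reals, derivable_pt_lim_cos.
Qed.

Lemma smooth_on_sin a b f : smooth_on a b f -> smooth_on a b (fun s => sin (f s)).
Proof.
intros Hf. apply (smooth_on_comp a b m_infty p_infty); [| exact Hf | intros s _; split; exact I].
apply smooth_on_Cn_on. intros n. apply Cn_on_sin_cos.
Qed.

Lemma smooth_on_cos a b f : smooth_on a b f -> smooth_on a b (fun s => cos (f s)).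
Proof.
intros Hf. apply (smooth_on_comp a b m_infty p_infty); [| exact Hf | intros s _; split; exact I].
apply smooth_on_Cn_on. intros n. apply Cn_on_sin_cos.
Qed.

Lemma Rinv_smooth_on_pos : smooth_on 0 p_infty Rinv.
Proof.
apply smooth_on_Cn_on. intros n. induction n as [|n IH]; [exact I |]. split.
- intros s [Hs _]. simpl in Hs. auto_derive. lra.
- apply (Cn_on_ext _ _ n (fun s => - (/ s * / s))).
  + intros s [Hs _]. simpl in Hs. symmetry. apply is_derive_unique.
    auto_derive; [lra |]. field. lra.
  + apply Cn_on_opp, Cn_on_mult; exact IH.
Qed.

Lemma sqrt_smooth_on_pos : smooth_on 0 p_infty sqrt.
Proof.
assert (Hsqrt : forall s, inI 0 p_infty s -> inI 0 p_infty (sqrt s)).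
{ intros s [Hs _]. split; [apply sqrt_lt_R0, Hs | exact I]. }
apply smooth_on_Cn_on. intros n. induction n as [|n IH]; [exact I |]. split.
- intros s [Hs _]. simpl in Hs. auto_derive. lra.
- apply (Cn_on_ext _ _ n (fun s => / 2 * / sqrt s)).
  + intros s [Hs _]. simpl in Hs. symmetry. apply is_derive_unique.
    pose proof (sqrt_lt_R0 s Hs). auto_derive; [lra |]. field. lra.
  + apply Cn_on_mult; [apply Cn_on_const |].
    apply (Cn_on_comp _ _ 0 p_infty); [| exact IH | exact Hsqrt].
    apply smooth_on_Cn_on, Rinv_smooth_on_pos.
Qed.

Lemma smooth_on_inv a b f : smooth_on a b f -> (forall s, inI a b s -> 0 < f s) ->
  smooth_on a b (fun s => / f s).
Proof.
intros Hf Hpos. apply (smooth_on_comp a b 0 p_infty Rinv); auto using Rinv_smooth_on_pos.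
intros s Hs. split; [exact (Hpos s Hs) | exact I].
Qed.

Lemma smooth_on_sqrt a b f : smooth_on a b f -> (forall s, inI a b s -> 0 < f s) ->
  smooth_on a b (fun s => sqrt (f s)).
Proof.
intros Hf Hpos. apply (smooth_on_comp a b 0 p_infty sqrt); auto using sqrt_smooth_on_pos.
intros s Hs. split; [exact (Hpos s Hs) | exact I].
Qed.

Lemma smooth_on_pow a b f n : smooth_on a b f -> smooth_on a b (fun s => f s ^ n).
Proof.
intros Hf. induction n as [|n IH].
- exact (smooth_on_ext a b (fun _ => 1) _ (fun s _ => eq_refl) (smooth_on_const a b 1)).
- exact (smooth_on_mult a b _ _ Hf IH).
Qed.

Lemma smooth_on_div a b f g : smooth_on a b f -> smooth_on a b g ->
  (forall s, inI a b s -> 0 < g s) -> smooth_on a b (fun s => f s / g s).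
Proof. intros Hf Hg Hpos. exact (smooth_on_mult a b _ _ Hf (smooth_on_inv a b g Hg Hpos)). Qed.

Lemma smooth_on_of_is_derive_autonomous a b c d (phi h : R -> R) :
  (forall u, inI c d u -> inI a b (phi u)) ->
  (forall u, inI c d u -> is_derive phi u (h (phi u))) ->
  smooth_on a b h -> smooth_on c d phi.
Proof.
intros Hin Hd Hh.
(* (k o phi)' = (k' h) o phi *)
assert (Hk : forall n k, smooth_on a b k -> Cn_on c d n (fun u => k (phi u))).
{ induction n as [|n IH]; intros k Hk; [exact I |].
  assert (Hphi : forall u, inI c d u -> ex_derive phi u) by (intros u Hu; eexists; exact (Hd u Hu)).
  split.
  - intros u Hu. apply ex_derive_comp; [| exact (Hphi u Hu)].
    exact (smooth_on_ex_derive a b k _ Hk (Hin u Hu)).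
  - apply (Cn_on_ext c d n (fun u => (fun z => Derive k z * h z) (phi u))).
    + intros u Hu. rewrite (Derive_comp k phi u), (is_derive_unique _ _ _ (Hd u Hu)).
      * apply Rmult_comm.
      * exact (smooth_on_ex_derive a b k _ Hk (Hin u Hu)).
      * exact (Hphi u Hu).
    + apply (IH (fun z => Derive k z * h z)).
      exact (smooth_on_mult a b _ _ (smooth_on_Derive a b k Hk) Hh). }
apply smooth_on_Cn_on. intros n. exact (Hk n (fun z => z) (smooth_on_id a b)).
Qed.

(** * Inverse of a function with positive derivative *)

Section Inverse.
Variables (a b : Rbar) (sig dsig : R -> R).
Hypothesis Hab : Rbar_lt a b.
Hypothesis sig_derive : forall s, inI a b s -> is_derive sig s (dsig s).
Hypothesis dsig_pos : forall s, inI a b s -> 0 < dsig s.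

Lemma sig_continuity_pt s : inI a b s -> continuity_pt sig s.
Proof.
intros Hs. apply continuity_pt_filterlim, (ex_derive_continuous sig).
eexists. exact (sig_derive s Hs).
Qed.

Lemma sig_lt s1 s2 : inI a b s1 -> inI a b s2 -> s1 < s2 -> sig s1 < sig s2.
Proof.
intros H1 H2 H12.
assert (Hin : forall z, s1 <= z <= s2 -> inI a b z) by (intros z; apply inI_between; auto).
destruct (MVT_gen sig s1 s2 dsig) as [z [Hz E]].
- intros z Hz. rewrite Rmin_left, Rmax_right in Hz by lra. apply sig_derive, Hin. lra.
- intros z Hz. rewrite Rmin_left, Rmax_right in Hz by lra. apply sig_continuity_pt, Hin, Hz.
- rewrite Rmin_left, Rmax_right in Hz by lra.
  pose proof (dsig_pos z (Hin z Hz)). nra.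
Qed.

Lemma sig_inj s1 s2 : inI a b s1 -> inI a b s2 -> sig s1 = sig s2 -> s1 = s2.
Proof.
intros H1 H2 E. destruct (Rtotal_order s1 s2) as [L | [L | L]]; auto.
- pose proof (sig_lt s1 s2 H1 H2 L). lra.
- pose proof (sig_lt s2 s1 H2 H1 L). lra.
Qed.

Definition sig_image (u : R) : Prop := exists s, inI a b s /\ sig s = u.
Definition image_inf : Rbar := Glb_Rbar sig_image.
Definition image_sup : Rbar := Lub_Rbar sig_image.

Lemma sig_in_image s : inI a b s -> inI image_inf image_sup (sig s).
Proof.
intros Hs. split.
- destruct (inI_exists_lt a b s Hs) as [s' [Hs' L]].
  apply Rbar_le_lt_trans with (Finite (sig s')).
  + apply (proj1 (Glb_Rbar_correct sig_image)). exists s'. auto.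
  + exact (sig_lt s' s Hs' Hs L).
- destruct (inI_exists_gt a b s Hs) as [s' [Hs' L]].
  apply Rbar_lt_le_trans with (Finite (sig s')).
  + exact (sig_lt s s' Hs Hs' L).
  + apply (proj1 (Lub_Rbar_correct sig_image)). exists s'. auto.
Qed.

Lemma image_inf_lt_sup : Rbar_lt image_inf image_sup.
Proof.
destruct (inI_nonempty a b Hab) as [s Hs].
destruct (sig_in_image s Hs) as [H1 H2]. exact (Rbar_lt_trans _ _ _ H1 H2).
Qed.

Lemma sig_onto u : inI image_inf image_sup u -> sig_image u.
Proof.
intros [Hinf Hsup].
assert (Hbelow : exists s1, inI a b s1 /\ sig s1 < u).
{ apply NNPP. intros K. apply (Rbar_lt_not_le _ _ Hinf).
  apply (proj2 (Glb_Rbar_correct sig_image)). intros v [s [Hs <-]].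
  simpl. apply Rnot_lt_le. intros L. apply K. exists s. auto. }
assert (Habove : exists s2, inI a b s2 /\ u < sig s2).
{ apply NNPP. intros K. apply (Rbar_lt_not_le _ _ Hsup).
  apply (proj2 (Lub_Rbar_correct sig_image)). intros v [s [Hs <-]].
  simpl. apply Rnot_lt_le. intros L. apply K. exists s. auto. }
destruct Hbelow as [s1 [H1 L1]], Habove as [s2 [H2 L2]].
assert (L : s1 < s2).
{ destruct (Rtotal_order s1 s2) as [L | [-> | L]]; [exact L | lra |].
  pose proof (sig_lt s2 s1 H2 H1 L). lra. }
assert (Hin : forall z, s1 <= z <= s2 -> inI a b z) by (intros z; apply inI_between; auto).
destruct (Ranalysis5.IVT_interv (fun z => sig z - u) s1 s2) as [z [Hz E]]; try lra.
- intros z Hz. apply continuity_pt_minus.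
  + apply sig_continuity_pt, Hin, Hz.
  + apply continuity_pt_const. intros ? ?. reflexivity.
- exists z. split; [apply Hin, Hz | lra].
Qed.

Definition sig_inv (u : R) : R := epsilon (inhabits 0) (fun s => inI a b s /\ sig s = u).

Lemma sig_inv_spec u : inI image_inf image_sup u -> inI a b (sig_inv u) /\ sig (sig_inv u) = u.
Proof. intros Hu. exact (epsilon_spec _ _ (sig_onto u Hu)). Qed.

Lemma sig_inv_sig s : inI a b s -> sig_inv (sig s) = s.
Proof.
intros Hs. destruct (sig_inv_spec (sig s) (sig_in_image s Hs)) as [H1 H2].
exact (sig_inj _ _ H1 Hs H2).
Qed.

Lemma is_derive_sig_inv u : inI image_inf image_sup u -> is_derive sig_inv u (/ dsig (sig_inv u)).
Proof.
intros Hu. destruct (sig_inv_spec u Hu) as [Hp Hsp].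
destruct (inI_exists_lt a b (sig_inv u) Hp) as [s1 [H1 L1]].
destruct (inI_exists_gt a b (sig_inv u) Hp) as [s2 [H2 L2]].
assert (M1 : sig s1 < u) by (rewrite <- Hsp; apply sig_lt; auto).
assert (M2 : u < sig s2) by (rewrite <- Hsp; apply sig_lt; auto).
assert (Hin : forall z, s1 <= z <= s2 -> inI a b z) by (intros z; apply inI_between; auto).
assert (Hv : forall v, sig s1 <= v <= sig s2 -> inI image_inf image_sup v).
{ intros v. apply inI_between; apply sig_in_image; auto. }
assert (Hinv : forall v, sig s1 <= v <= sig s2 -> s1 <= sig_inv v <= s2).
{ intros v Hv'. destruct (sig_inv_spec v (Hv v Hv')) as [K1 K2]. split.
  - apply Rnot_lt_le. intros L. pose proof (sig_lt _ s1 K1 H1 L). lra.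
  - apply Rnot_lt_le. intros L. pose proof (sig_lt s2 _ H2 K1 L). lra. }
assert (Hcont : continuity_pt sig_inv u).
{ apply (Ranalysis5.continuity_pt_recip_interv sig sig_inv s1 s2); try lra.
  - intros z w Hz Hzw Hw. apply sig_lt; auto; apply Hin; lra.
  - intros v Hv1 Hv2. unfold comp, id. apply sig_inv_spec, Hv. lra.
  - intros v Hv1 Hv2. apply Hinv. lra.
  - intros z Hz. apply sig_continuity_pt, Hin, Hz. }
assert (Hder : forall z, sig_inv (sig s1) <= z <= sig_inv (sig s2) -> derivable_pt sig z).
{ intros z Hz. rewrite !sig_inv_sig in Hz by auto.
  exists (dsig z). apply is_derive_Reals, sig_derive, Hin, Hz. }
assert (Hs : sig_inv (sig s1) <= sig_inv u <= sig_inv (sig s2))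
  by (rewrite !sig_inv_sig by auto; lra).
assert (Hds : derive_pt sig (sig_inv u) (Hder (sig_inv u) Hs) = dsig (sig_inv u)).
{ apply derive_pt_eq_0, is_derive_Reals, sig_derive, Hp. }
pose proof (dsig_pos (sig_inv u) Hp) as Hf.
apply is_derive_Reals.
replace (/ dsig (sig_inv u)) with (1 / derive_pt sig (sig_inv u) (Hder (sig_inv u) Hs))
  by (rewrite Hds; field; lra).
apply (Ranalysis5.derivable_pt_lim_recip_interv sig sig_inv (sig s1) (sig s2) u Hder Hcont);
  try lra.
- intros v Hv'. unfold comp, id. apply sig_inv_spec, Hv, Hv'.
Qed.

End Inverse.

(** * Gauss curvature of the rotational surface *)

Definition Phi_E (l : R) (x y : R -> R) (s : R) : R :=
  Derive x s ^ 2 + cos (x s) ^ 2 * (1 - l * cos (x s) ^ 2) * Derive y s ^ 2.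
Definition Phi_F (l : R) (x y : R -> R) (s : R) : R :=
  - l * cos (x s) ^ 2 * sin (x s) ^ 2 * Derive y s.
Definition Phi_G (l : R) (x : R -> R) (s : R) : R :=
  sin (x s) ^ 2 - l * sin (x s) ^ 4.

Lemma Ds_Phi (x y : R -> R) s t : ex_derive x s -> ex_derive y s ->
  Ds (Phi x y) s t =
  (- sin (y s) * Derive y s * cos (x s) - cos (y s) * sin (x s) * Derive x s,
   cos (y s) * Derive y s * cos (x s) - sin (y s) * sin (x s) * Derive x s,
   cos t * cos (x s) * Derive x s, sin t * cos (x s) * Derive x s).
Proof.
intros Hx Hy. unfold Ds, Defs.c1, Defs.c2, Defs.c3, Defs.c4, Phi; cbv beta iota.
f_equal; [f_equal; [f_equal |] |]; apply is_derive_unique; auto_derive; auto;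
  try change (fun v => x v) with x; try change (fun v => y v) with y; ring.
Qed.

Lemma Dt_Phi (x y : R -> R) s t : Dt (Phi x y) s t = (0, 0, - sin t * sin (x s), cos t * sin (x s)).
Proof.
unfold Dt, Defs.c1, Defs.c2, Defs.c3, Defs.c4, Phi; cbv beta iota.
f_equal; [f_equal; [f_equal |] |]; apply is_derive_unique; auto_derive; auto; ring.
Qed.

Lemma fundE_Phi tau (x y : R -> R) s t : ex_derive x s -> ex_derive y s ->
  fundE tau (Phi x y) s t = Phi_E (lam tau) x y s.
Proof.
intros Hx Hy. unfold fundE. rewrite Ds_Phi by assumption.
unfold berger_metric, dot4, Vfield, Phi, Phi_E, lam.
rationalize_angle (y s); rationalize_angle t; rationalize_angle (x s); field; auto.
Qed.

Lemma fundF_Phi tau (x y : R -> R) s t : ex_derive x s -> ex_derive y s ->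
  fundF tau (Phi x y) s t = Phi_F (lam tau) x y s.
Proof.
intros Hx Hy. unfold fundF. rewrite Ds_Phi, Dt_Phi by assumption.
unfold berger_metric, dot4, Vfield, Phi, Phi_F, lam.
rationalize_angle (y s); rationalize_angle t; rationalize_angle (x s); field; auto.
Qed.

Lemma fundG_Phi tau (x y : R -> R) s t : fundG tau (Phi x y) s t = Phi_G (lam tau) x s.
Proof.
unfold fundG. rewrite Dt_Phi. unfold berger_metric, dot4, Vfield, Phi, Phi_G, lam.
rationalize_angle (y s); rationalize_angle t; rationalize_angle (x s); field; auto.
Qed.

(* Brioschi's formula when E, F, G do not depend on t: E1, F1, G1 are their s-derivatives
   and G2 is G_ss. *)
Definition brioschi_t_invariant (E F G E1 F1 G1 G2 : R) : R :=
  (det3 (- G2 / 2) (E1 / 2) F1 (- G1 / 2) E F 0 F G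
   - det3 0 0 (G1 / 2) 0 E F (G1 / 2) F G) / (E * G - F ^ 2) ^ 2.

Lemma gauss_curvature_t_invariant tau (f : R -> R -> R4) a b (e g h : R -> R) s t :
  (forall s t, inI a b s -> fundE tau f s t = e s) ->
  (forall s t, inI a b s -> fundF tau f s t = g s) ->
  (forall s t, inI a b s -> fundG tau f s t = h s) ->
  inI a b s ->
  gauss_curvature tau f s t =
  brioschi_t_invariant (e s) (g s) (h s)
    (Derive e s) (Derive g s) (Derive h s) (Derive (Derive h) s).
Proof.
intros He Hg Hh Hs.
set (E := fundE tau f); set (F := fundF tau f); set (G := fundG tau f).
assert (Hloc : forall k c, (forall u, inI a b u -> k u = c u) -> Derive k s = Derive c s)
  by (intros k c Hk; exact (Derive_ext_loc _ _ _ (filter_imp _ _ Hk (inI_locally a b s Hs)))).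
assert (Hconst : forall (k : R -> R) c v, (forall t, k t = c) -> Derive k v = 0)
  by (intros k c v Hk; rewrite (Derive_ext _ _ _ Hk); apply Derive_const).
assert (Et : forall u v, inI a b u -> pdt E u v = 0)
  by (intros u v Hu; exact (Hconst _ (e u) v (fun t => He u t Hu))).
assert (Ft : forall u v, inI a b u -> pdt F u v = 0)
  by (intros u v Hu; exact (Hconst _ (g u) v (fun t => Hg u t Hu))).
assert (Gt : pdt G s t = 0) by exact (Hconst _ (h s) t (fun t => Hh s t Hs)).
assert (Ett : pdt (pdt E) s t = 0) by exact (Hconst _ 0 t (fun v => Et s v Hs)).
assert (Fst : pds (pdt F) s t = 0).
{ unfold pds. rewrite (Hloc _ (fun _ => 0)) by (intros u Hu; exact (Ft u t Hu)).
  apply Derive_const. }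
assert (Es : pds E s t = Derive e s) by exact (Hloc _ e (fun u Hu => He u t Hu)).
assert (Fs : pds F s t = Derive g s) by exact (Hloc _ g (fun u Hu => Hg u t Hu)).
assert (Gs : forall u, inI a b u -> pds G u t = Derive h u).
{ intros u Hu. unfold pds.
  exact (Derive_ext_loc _ _ _ (filter_imp _ _ (fun v Hv => Hh v t Hv) (inI_locally a b u Hu))). }
assert (Gss : pds (pds G) s t = Derive (Derive h) s) by exact (Hloc _ _ (fun u Hu => Gs u Hu)).
unfold gauss_curvature. cbv zeta. fold E F G.
rewrite Es, Fs, (Gs s Hs), Gss, (Et s t Hs), (Ft s t Hs), Gt, Ett, Fst, He, Hg, Hh by exact Hs.
unfold brioschi_t_invariant, det3. apply Rmult_eq_compat_r. field.
Qed.

(* [s, c] stand for [sin x, cos x] and [p, p2, q, q2] for [x', x'', y', y'']. *)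
Definition profile_curvature (l s c p p2 q q2 : R) : R :=
  brioschi_t_invariant
    (p ^ 2 + c ^ 2 * (1 - l * c ^ 2) * q ^ 2) (- l * c ^ 2 * s ^ 2 * q) (s ^ 2 - l * s ^ 4)
    (2 * p * p2 - 2 * c * s * p * (1 - l * c ^ 2) * q ^ 2 + 2 * l * c ^ 3 * s * p * q ^ 2
     + 2 * c ^ 2 * (1 - l * c ^ 2) * q * q2)
    (- l * (- 2 * c * s ^ 3 * p * q + 2 * c ^ 3 * s * p * q + c ^ 2 * s ^ 2 * q2))
    (2 * s * c * p - 4 * l * s ^ 3 * c * p)
    ((2 * (c ^ 2 - s ^ 2) - 4 * l * (3 * s ^ 2 * c ^ 2 - s ^ 4)) * p ^ 2
     + (2 * s * c - 4 * l * s ^ 3 * c) * p2).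

Lemma gauss_curvature_Phi tau a b (x y : R -> R) s t :
  (forall u, inI a b u -> ex_derive x u) -> (forall u, inI a b u -> ex_derive (Derive x) u) ->
  (forall u, inI a b u -> ex_derive y u) -> (forall u, inI a b u -> ex_derive (Derive y) u) ->
  inI a b s ->
  gauss_curvature tau (Phi x y) s t =
  profile_curvature (lam tau) (sin (x s)) (cos (x s))
    (Derive x s) (Derive (Derive x) s) (Derive y s) (Derive (Derive y) s).
Proof.
intros Hx Hx' Hy Hy' Hs. set (l := lam tau).
rewrite (gauss_curvature_t_invariant tau (Phi x y) a b (Phi_E l x y) (Phi_F l x y) (Phi_G l x));
  [| intros u v Hu; apply fundE_Phi; auto
   | intros u v Hu; apply fundF_Phi; auto
   | intros u v Hu; apply fundG_Phi
   | exact Hs].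
assert (DG : forall u, inI a b u ->
  Derive (Phi_G l x) u =
  2 * sin (x u) * cos (x u) * Derive x u - 4 * l * sin (x u) ^ 3 * cos (x u) * Derive x u).
{ intros u Hu. apply is_derive_unique. unfold Phi_G. auto_derive; [auto |].
  try change (fun v => x v) with x. ring. }
assert (DE : Derive (Phi_E l x y) s =
  2 * Derive x s * Derive (Derive x) s
  - 2 * cos (x s) * sin (x s) * Derive x s * (1 - l * cos (x s) ^ 2) * Derive y s ^ 2
  + 2 * l * cos (x s) ^ 3 * sin (x s) * Derive x s * Derive y s ^ 2
  + 2 * cos (x s) ^ 2 * (1 - l * cos (x s) ^ 2) * Derive y s * Derive (Derive y) s).
{ apply is_derive_unique. unfold Phi_E. auto_derive; [repeat split; auto |].
  try change (fun v => x v) with x; try change (fun v => y v) with y;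
  try change (fun v => Derive x v) with (Derive x);
  try change (fun v => Derive y v) with (Derive y).
  ring. }
assert (DF : Derive (Phi_F l x y) s =
  - l * (- 2 * cos (x s) * sin (x s) ^ 3 * Derive x s * Derive y s
         + 2 * cos (x s) ^ 3 * sin (x s) * Derive x s * Derive y s
         + cos (x s) ^ 2 * sin (x s) ^ 2 * Derive (Derive y) s)).
{ apply is_derive_unique. unfold Phi_F. auto_derive; [repeat split; auto |].
  try change (fun v => x v) with x; try change (fun v => Derive y v) with (Derive y).
  ring. }
assert (DGG : Derive (Derive (Phi_G l x)) s =
  (2 * (cos (x s) ^ 2 - sin (x s) ^ 2)
   - 4 * l * (3 * sin (x s) ^ 2 * cos (x s) ^ 2 - sin (x s) ^ 4)) * Derive x s ^ 2
  + (2 * sin (x s) * cos (x s) - 4 * l * sin (x s) ^ 3 * cos (x s)) * Derive (Derive x) s).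
{ rewrite (Derive_ext_loc _ _ s (filter_imp _ _ DG (inI_locally a b s Hs))).
  apply is_derive_unique. auto_derive; [repeat split; auto |].
  try change (fun v => x v) with x; try change (fun v => Derive x v) with (Derive x).
  ring. }
rewrite DE, DF, (DG s Hs), DGG. reflexivity.
Qed.

(* Squared speed of the profile curve in the orbit-space metric
   dx^2 + (1 - l) c^2 / (1 - l s^2) dy^2, and its derivative. *)
Definition orbit_speed_sq (l s c p q : R) : R := p ^ 2 + (1 - l) * c ^ 2 * q ^ 2 / (1 - l * s ^ 2).

Definition orbit_speed_sq_deriv (l s c p p2 q q2 : R) : R :=
  2 * p * p2 + (1 - l) * ((- 2 * c * s * p * q ^ 2 + 2 * c ^ 2 * q * q2) * (1 - l * s ^ 2)
                          + 2 * l * s * c ^ 3 * p * q ^ 2) / (1 - l * s ^ 2) ^ 2.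

(* The left-hand side is (x' / sqrt Q)' / sqrt Q, the derivative of cos alpha with respect
   to arc length. *)
Lemma profile_curvature_identity l s c p p2 q q2 :
  s ^ 2 + c ^ 2 = 1 -> s <> 0 -> c <> 0 -> 1 - l * s ^ 2 <> 0 -> 1 - 2 * l * s ^ 2 <> 0 ->
  orbit_speed_sq l s c p q <> 0 ->
  let Q := orbit_speed_sq l s c p q in
  (p2 * Q - p * orbit_speed_sq_deriv l s c p p2 q q2 / 2) / Q ^ 2 =
  - (s / c) * ((1 - l * s ^ 2) / (1 - 2 * l * s ^ 2) * profile_curvature l s c p p2 q q2
               - p ^ 2 / Q * ((1 - l) / (1 - l * s ^ 2) + 4 * l * c ^ 2 / (1 - 2 * l * s ^ 2))).
Proof.
intros Hsc Hs Hc H1 H2 HQ Q.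
set (N := p ^ 2 * (1 - l * s ^ 2) + (1 - l) * c ^ 2 * q ^ 2).
assert (HN : N <> 0).
{ replace N with ((1 - l * s ^ 2) * Q) by (unfold N, Q, orbit_speed_sq; field; exact H1).
  apply Rmult_integral_contrapositive_currified; assumption. }
assert (HEG : (p ^ 2 + c ^ 2 * (1 - l * c ^ 2) * q ^ 2) * (s ^ 2 - l * s ^ 4)
              - (- l * c ^ 2 * s ^ 2 * q) ^ 2 = s ^ 2 * N).
{ unfold N. replace (c ^ 2) with (1 - s ^ 2) by lra. ring. }
unfold profile_curvature, brioschi_t_invariant, det3. rewrite HEG.
unfold Q, N, orbit_speed_sq, orbit_speed_sq_deriv in *.
field_simplify_eq; [| repeat split; auto using pow_nonzero].
destruct (circle_rational_param s c Hsc) as [[-> _] | (r & Hr & -> & ->)]; [contradiction |].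
field. exact Hr.
Qed.

(** * Conservation of the energy *)

Lemma energy_is_derive_0 tau K x y alpha u : 0 < tau ->
  ex_derive x u -> ex_derive alpha u -> cos (x u) <> 0 -> sin (alpha u) <> 0 ->
  1 - 2 * lam tau * sin (x u) ^ 2 <> 0 -> rot_system tau x y alpha K u ->
  is_derive (energy tau K x alpha) u 0.
Proof.
intros Htau Hx Ha Hc Hs H2 [Dx [_ Dal]].
pose proof (one_sub_lam_sin_sqr_pos tau (x u) Htau Hc) as H1.
unfold energy. auto_derive; [repeat split; auto; lra |].
change (fun v => x v) with x. change (fun v => alpha v) with alpha.
rewrite Dx, Dal. unfold tan. set (l := lam tau) in *.
pose proof (sin_sqr_add_cos_sqr (x u)) as Hsc.
revert Hc H1 H2 Hs Hsc.
generalize (sin (x u)) (cos (x u)) (sin (alpha u)) (cos (alpha u)).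
intros s c sa ca Hc H1 H2 Hs Hsc.
field_simplify_eq; [| repeat split; auto; lra].
destruct (circle_rational_param s c Hsc) as [[-> ->] | (q & Hq & -> & ->)].
- ring.
- field. exact Hq.
Qed.

(** * Arc-length reparametrization of the profile curve *)

Section Profile.
Variables (tau : R) (a b : Rbar) (x y : R -> R).
Hypothesis Htau : 0 < tau.
Hypothesis Hab : Rbar_lt a b.
Hypothesis Hx : smooth_on a b x.
Hypothesis Hy : smooth_on a b y.
Hypothesis Hprofile : forall s, inI a b s ->
  0 < sin (x s) /\ cos (x s) <> 0 /\ 1 - 2 * lam tau * sin (x s) ^ 2 <> 0 /\ Derive y s <> 0.

Lemma one_sub_lam_sin_sqr_x_pos s : inI a b s -> 0 < 1 - lam tau * sin (x s) ^ 2.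
Proof. intros Hs. apply one_sub_lam_sin_sqr_pos; [exact Htau | apply Hprofile, Hs]. Qed.

Definition speed_sq (s : R) : R :=
  orbit_speed_sq (lam tau) (sin (x s)) (cos (x s)) (Derive x s) (Derive y s).
Definition speed (s : R) : R := sqrt (speed_sq s).

Lemma speed_sq_pos s : inI a b s -> 0 < speed_sq s.
Proof.
intros Hs. destruct (Hprofile s Hs) as (_ & Hc & _ & Hy1).
pose proof (one_sub_lam_sin_sqr_x_pos s Hs). unfold speed_sq, orbit_speed_sq. rewrite one_sub_lam.
pose proof (pow2_ge_0 (Derive x s)).
assert (0 < tau ^ 2 * cos (x s) ^ 2 * Derive y s ^ 2 / (1 - lam tau * sin (x s) ^ 2)).
{ apply Rdiv_lt_0_compat; [| lra]. apply Rmult_lt_0_compat; [apply Rmult_lt_0_compat |];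
  apply pow2_gt_0; lra. }
lra.
Qed.

Lemma speed_pos s : inI a b s -> 0 < speed s.
Proof. intros Hs. apply sqrt_lt_R0, speed_sq_pos, Hs. Qed.

Lemma sqr_speed s : inI a b s -> speed s ^ 2 = speed_sq s.
Proof.
intros Hs. unfold speed. rewrite <- Rsqr_pow2. apply Rsqr_sqrt. left. apply speed_sq_pos, Hs.
Qed.

Lemma smooth_speed_sq : smooth_on a b speed_sq.
Proof.
pose proof (smooth_on_Derive a b x Hx) as Hx1. pose proof (smooth_on_Derive a b y Hy) as Hy1.
apply smooth_on_plus; [apply smooth_on_pow, Hx1 |].
apply smooth_on_div; [| | exact one_sub_lam_sin_sqr_x_pos].
- apply smooth_on_mult; [apply smooth_on_mult; [apply smooth_on_const |] |];
    apply smooth_on_pow; [apply smooth_on_cos, Hx | exact Hy1].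
- apply smooth_on_minus; [apply smooth_on_const |].
  apply smooth_on_mult; [apply smooth_on_const | apply smooth_on_pow, smooth_on_sin, Hx].
Qed.

Lemma smooth_speed : smooth_on a b speed.
Proof. exact (smooth_on_sqrt a b speed_sq smooth_speed_sq speed_sq_pos). Qed.

Definition base_point : { s | inI a b s } :=
  constructive_indefinite_description _ (inI_nonempty a b Hab).
Definition arclength (s : R) : R := RInt speed (proj1_sig base_point) s.

Lemma is_derive_arclength s : inI a b s -> is_derive arclength s (speed s).
Proof.
intros Hs.
pose proof (proj2_sig base_point) as Hs0. unfold arclength. set (s0 := proj1_sig base_point) in *.
assert (Hcont : forall z, inI a b z -> continuous speed z).
{ intros z Hz. apply (ex_derive_continuous speed), (smooth_on_ex_derive a b _ _ smooth_speed Hz). }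
apply (is_derive_RInt speed (RInt speed s0) s0 s); [| exact (Hcont s Hs)].
apply (filter_imp (inI a b)); [| exact (inI_locally a b s Hs)].
intros z Hz. apply (RInt_correct (V := R_CompleteNormedModule)).
apply (ex_RInt_continuous (V := R_CompleteNormedModule)).
intros w Hw. exact (Hcont w (inI_between_Rmin_Rmax a b _ _ w Hs0 Hz Hw)).
Qed.

Definition reparam : R -> R := sig_inv a b arclength.
Definition arclength_inf : Rbar := image_inf a b arclength.
Definition arclength_sup : Rbar := image_sup a b arclength.

Lemma arclength_inf_lt_sup : Rbar_lt arclength_inf arclength_sup.
Proof. exact (image_inf_lt_sup a b arclength speed Hab is_derive_arclength speed_pos). Qed.

Lemma reparam_in u : inI arclength_inf arclength_sup u -> inI a b (reparam u).
Proof.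
intros Hu. exact (proj1 (sig_inv_spec a b arclength speed is_derive_arclength speed_pos u Hu)).
Qed.

Lemma reparam_onto s : inI a b s -> exists u, inI arclength_inf arclength_sup u /\ reparam u = s.
Proof.
intros Hs. exists (arclength s). split.
- exact (sig_in_image a b arclength speed is_derive_arclength speed_pos s Hs).
- exact (sig_inv_sig a b arclength speed is_derive_arclength speed_pos s Hs).
Qed.

Lemma is_derive_reparam u :
  inI arclength_inf arclength_sup u -> is_derive reparam u (/ speed (reparam u)).
Proof. exact (is_derive_sig_inv a b arclength speed is_derive_arclength speed_pos u). Qed.

Lemma smooth_reparam : smooth_on arclength_inf arclength_sup reparam.
Proof.
apply (smooth_on_of_is_derive_autonomous a b _ _ reparam (fun s => / speed s)).
- exact reparam_in.
- exact is_derive_reparam.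
- exact (smooth_on_inv a b speed smooth_speed speed_pos).
Qed.

Definition cos_alpha (s : R) : R := Derive x s / speed s.
Definition sin_alpha (s : R) : R :=
  tau * cos (x s) * Derive y s / (sqrt (1 - lam tau * sin (x s) ^ 2) * speed s).

Lemma cos_alpha_sqr_add_sin_alpha_sqr s : inI a b s -> cos_alpha s ^ 2 + sin_alpha s ^ 2 = 1.
Proof.
intros Hs. pose proof (one_sub_lam_sin_sqr_x_pos s Hs) as Hw. pose proof (speed_pos s Hs) as Hv.
assert (Hr : sqrt (1 - lam tau * sin (x s) ^ 2) ^ 2 = 1 - lam tau * sin (x s) ^ 2)
  by (rewrite <- Rsqr_pow2; apply Rsqr_sqrt; lra).
pose proof (sqrt_lt_R0 _ Hw).
replace (cos_alpha s ^ 2 + sin_alpha s ^ 2) with (speed_sq s / speed s ^ 2).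
- rewrite (sqr_speed s Hs). field. pose proof (speed_sq_pos s Hs). lra.
- unfold cos_alpha, sin_alpha, speed_sq, orbit_speed_sq.
  rewrite one_sub_lam, <- Hr at 1. field. lra.
Qed.

Lemma sin_alpha_neq_0 s : inI a b s -> sin_alpha s <> 0.
Proof.
intros Hs. destruct (Hprofile s Hs) as (_ & Hc & _ & Hy1).
pose proof (sqrt_lt_R0 _ (one_sub_lam_sin_sqr_x_pos s Hs)). pose proof (speed_pos s Hs).
unfold sin_alpha, Rdiv. repeat apply Rmult_integral_contrapositive_currified; try lra.
apply Rinv_neq_0_compat, Rgt_not_eq, Rmult_lt_0_compat; assumption.
Qed.

Lemma smooth_sin_alpha : smooth_on a b sin_alpha.
Proof.
apply smooth_on_div.
- apply smooth_on_mult; [apply smooth_on_mult; [apply smooth_on_const | apply smooth_on_cos, Hx] |].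
  apply smooth_on_Derive, Hy.
- apply smooth_on_mult; [| exact smooth_speed].
  apply smooth_on_sqrt; [| exact one_sub_lam_sin_sqr_x_pos].
  apply smooth_on_minus; [apply smooth_on_const |].
  apply smooth_on_mult; [apply smooth_on_const | apply smooth_on_pow, smooth_on_sin, Hx].
- intros s Hs. apply Rmult_lt_0_compat; [apply sqrt_lt_R0, one_sub_lam_sin_sqr_x_pos, Hs |].
  apply speed_pos, Hs.
Qed.

Definition speed_sq_deriv (s : R) : R :=
  orbit_speed_sq_deriv (lam tau) (sin (x s)) (cos (x s))
    (Derive x s) (Derive (Derive x) s) (Derive y s) (Derive (Derive y) s).

Lemma is_derive_speed_sq s : inI a b s -> is_derive speed_sq s (speed_sq_deriv s).
Proof.
intros Hs. pose proof (one_sub_lam_sin_sqr_x_pos s Hs).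
pose proof (smooth_on_ex_derive a b x s Hx Hs).
pose proof (smooth_on_ex_derive a b y s Hy Hs).
pose proof (smooth_on_ex_derive a b _ s (smooth_on_Derive a b x Hx) Hs).
pose proof (smooth_on_ex_derive a b _ s (smooth_on_Derive a b y Hy) Hs).
unfold speed_sq, speed_sq_deriv, orbit_speed_sq, orbit_speed_sq_deriv.
auto_derive; [repeat split; auto; lra |].
try change (fun v => x v) with x; try change (fun v => Derive x v) with (Derive x);
  try change (fun v => Derive y v) with (Derive y).
field. lra.
Qed.

Definition cos_alpha_deriv (s : R) : R :=
  (Derive (Derive x) s * speed_sq s - Derive x s * speed_sq_deriv s / 2) / (speed_sq s * speed s).

Lemma is_derive_cos_alpha s : inI a b s -> is_derive cos_alpha s (cos_alpha_deriv s).
Proof.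
intros Hs. pose proof (speed_sq_pos s Hs). pose proof (speed_pos s Hs).
pose proof (is_derive_speed_sq s Hs) as HdQ.
pose proof (smooth_on_ex_derive a b _ s (smooth_on_Derive a b x Hx) Hs).
unfold cos_alpha, cos_alpha_deriv, speed.
auto_derive; [repeat split; try assumption; [eexists; exact HdQ | fold (speed s); lra] |].
try change (fun v => Derive x v) with (Derive x); try change (fun v => speed_sq v) with speed_sq.
rewrite (is_derive_unique speed_sq s _ HdQ). fold (speed s).
rewrite <- (sqr_speed s Hs). field. lra.
Qed.

Definition alpha (u : R) : R := polar_angle (cos_alpha (reparam u)) (sin_alpha (reparam u)).

Lemma is_derive_alpha u : inI arclength_inf arclength_sup u ->
  is_derive alpha u
    (- (/ speed (reparam u) * cos_alpha_deriv (reparam u)) / sin_alpha (reparam u)).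
Proof.
intros Hu. pose proof (reparam_in u Hu) as Hs. pose proof (is_derive_reparam u Hu) as Hr.
apply (is_derive_polar_angle (fun v => cos_alpha (reparam v)) (fun v => sin_alpha (reparam v))).
- exact (cos_alpha_sqr_add_sin_alpha_sqr _ Hs).
- exact (sin_alpha_neq_0 _ Hs).
- apply (continuous_comp reparam sin_alpha u).
  + apply (ex_derive_continuous reparam). eexists. exact Hr.
  + apply (ex_derive_continuous sin_alpha), (smooth_on_ex_derive a b _ _ smooth_sin_alpha Hs).
- exact (is_derive_comp cos_alpha reparam u _ _ (is_derive_cos_alpha _ Hs) Hr).
Qed.

Lemma Derive_alpha u : inI arclength_inf arclength_sup u ->
  let s := reparam u in
  Derive alpha u = tan (x s) / sin (alpha u) *
    ((1 - lam tau * sin (x s) ^ 2) / (1 - 2 * lam tau * sin (x s) ^ 2)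
       * gauss_curvature tau (Phi x y) s 0
     - cos (alpha u) ^ 2 * ((1 - lam tau) / (1 - lam tau * sin (x s) ^ 2)
                             + 4 * lam tau * cos (x s) ^ 2 / (1 - 2 * lam tau * sin (x s) ^ 2))).
Proof.
intros Hu s. pose proof (reparam_in u Hu) as Hs. fold s in Hs.
destruct (Hprofile s Hs) as (HS & HC & H2 & _).
pose proof (speed_sq_pos s Hs). pose proof (speed_pos s Hs).
pose proof (one_sub_lam_sin_sqr_x_pos s Hs).
pose proof (cos_alpha_sqr_add_sin_alpha_sqr s Hs) as Hunit.
rewrite (is_derive_unique _ _ _ (is_derive_alpha u Hu)). unfold alpha. fold s.
rewrite (sin_polar_angle _ _ Hunit), (cos_polar_angle _ _ Hunit),
  (gauss_curvature_Phi tau a b x y s 0); try exact Hs;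
  try (intros v Hv; apply smooth_on_ex_derive with a b; auto using smooth_on_Derive).
assert (Hkey := profile_curvature_identity (lam tau) (sin (x s)) (cos (x s))
  (Derive x s) (Derive (Derive x) s) (Derive y s) (Derive (Derive y) s)
  (sin_sqr_add_cos_sqr _) ltac:(lra) HC ltac:(lra) H2 ltac:(fold (speed_sq s); lra)).
cbv zeta in Hkey. fold (speed_sq s) (speed_sq_deriv s) in Hkey.
replace (cos_alpha s ^ 2) with (Derive x s ^ 2 / speed_sq s)
  by (unfold cos_alpha; rewrite <- (sqr_speed s Hs); field; lra).
match type of Hkey with _ = _ * ?A => set (bracket := A) in * end.
unfold tan. replace (sin (x s) / cos (x s) / sin_alpha s * bracket)
  with (- (- (sin (x s) / cos (x s)) * bracket) / sin_alpha s)
  by (field; split; [exact HC | exact (sin_alpha_neq_0 s Hs)]).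
rewrite <- Hkey. unfold cos_alpha_deriv. rewrite <- (sqr_speed s Hs).
field. repeat split; try lra. exact (sin_alpha_neq_0 s Hs).
Qed.

Lemma rot_system_reparam u : inI arclength_inf arclength_sup u ->
  rot_system tau (fun v => x (reparam v)) (fun v => y (reparam v)) alpha
    (gauss_curvature tau (Phi x y) (reparam u) 0) u.
Proof.
intros Hu. pose proof (reparam_in u Hu) as Hs. pose proof (is_derive_reparam u Hu) as Hr.
set (s := reparam u) in *.
pose proof (speed_pos s Hs). pose proof (sqrt_lt_R0 _ (one_sub_lam_sin_sqr_x_pos s Hs)).
pose proof (cos_alpha_sqr_add_sin_alpha_sqr s Hs) as Hunit.
assert (Hcomp : forall f, ex_derive f s ->
  Derive (fun v => f (reparam v)) u = Derive f s / speed s).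
{ intros f Hf. rewrite (Derive_comp f reparam u Hf) by (eexists; exact Hr).
  rewrite (is_derive_unique _ _ _ Hr). fold s. field. lra. }
unfold rot_system. cbv zeta. fold s. split; [| split].
- unfold alpha. fold s.
  rewrite Hcomp, (cos_polar_angle _ _ Hunit) by exact (smooth_on_ex_derive a b x s Hx Hs).
  reflexivity.
- unfold alpha. fold s.
  rewrite Hcomp, (sin_polar_angle _ _ Hunit) by exact (smooth_on_ex_derive a b y s Hy Hs).
  unfold sin_alpha. field. destruct (Hprofile s Hs) as (_ & HC & _). repeat split; lra.
- exact (Derive_alpha u Hu).
Qed.

Lemma profile_reparametrization :
  exists (c d : Rbar) (phi alpha : R -> R),
    Rbar_lt c d /\ smooth_on c d phi /\
    (forall u, inI c d u -> inI a b (phi u) /\ Derive phi u <> 0) /\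
    (forall s, inI a b s -> exists u, inI c d u /\ phi u = s) /\
    (forall u, inI c d u ->
       ex_derive alpha u /\
       rot_system tau (fun v => x (phi v)) (fun v => y (phi v)) alpha
         (gauss_curvature tau (Phi x y) (phi u) 0) u).
Proof.
exists arclength_inf, arclength_sup, reparam, alpha.
split; [exact arclength_inf_lt_sup |]. split; [exact smooth_reparam |].
split; [| split; [exact reparam_onto |]].
- intros u Hu. split; [exact (reparam_in u Hu) |].
  rewrite (is_derive_unique _ _ _ (is_derive_reparam u Hu)).
  apply Rinv_neq_0_compat, Rgt_not_eq, speed_pos, reparam_in, Hu.
- intros u Hu. split; [eexists; exact (is_derive_alpha u Hu) | exact (rot_system_reparam u Hu)].
Qed.

End Profile.

Theorem lemma3p1 (tau : R) (Htau : 0 < tau) :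
  (* Part 1: existence of the arc-length-type reparametrization and alpha *)
  (forall (a b : Rbar) (x y K : R -> R),
     Rbar_lt a b ->
     smooth_on a b x -> smooth_on a b y ->
     (forall s, inI a b s ->
        0 < sin (x s) /\ cos (x s) <> 0 /\
        1 - 2 * lam tau * sin (x s) ^ 2 <> 0 /\ Derive y s <> 0) ->
     (forall s t, inI a b s -> K s = gauss_curvature tau (Phi x y) s t) ->
     exists (c d : Rbar) (phi alpha : R -> R),
       Rbar_lt c d /\ smooth_on c d phi /\
       (forall u, inI c d u -> inI a b (phi u) /\ Derive phi u <> 0) /\
       (forall s, inI a b s -> exists u, inI c d u /\ phi u = s) /\
       (forall u, inI c d u ->
          ex_derive alpha u /\
          rot_system tau (fun v => x (phi v)) (fun v => y (phi v)) alpha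
                     (K (phi u)) u))
  /\
  (* Part 2: conservation of \mathcal{E} for constant K *)
  (forall (K : R) (c d : Rbar) (x y alpha : R -> R),
     Rbar_lt c d ->
     (forall u, inI c d u ->
        ex_derive x u /\ ex_derive y u /\ ex_derive alpha u /\
        cos (x u) <> 0 /\ sin (alpha u) <> 0 /\
        1 - 2 * lam tau * sin (x u) ^ 2 <> 0 /\
        rot_system tau x y alpha K u) ->
     forall u v, inI c d u -> inI c d v ->
       energy tau K x alpha u = energy tau K x alpha v).
Proof.
split.
- intros a b x y K Hab Hx Hy Hprofile HK.
  destruct (profile_reparametrization tau a b x y Htau Hab Hx Hy Hprofile)
    as (c & d & phi & alpha & Hcd & Hphi & Hin & Honto & Hrot).
  exists c, d, phi, alpha. repeat (split; [assumption |]).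
  intros u Hu. rewrite (HK _ 0 (proj1 (Hin u Hu))). exact (Hrot u Hu).
- intros K c d x y alpha _ Hsol. apply is_derive_0_const_on.
  intros u Hu. destruct (Hsol u Hu) as (Hx & _ & Ha & Hc & Hs & H2 & Hrot).
  exact (energy_is_derive_0 tau K x y alpha u Htau Hx Ha Hc Hs H2 Hrot).
Qed.
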